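(* Let $\Gamma=(V,E,w)$ be a finite simple weighted digraph with vertex set $V=\{1,\dots,n\}$ and weights $0\le w_{ij}\le 1$ (with $w_{ij}=0$ iff $(i,j)\notin E$), and let $L=D-A$ be its graph Laplacian. Then $\Gamma$ is a complete dominance graph if and only if there exists a permutation matrix $P$ such that, for each $i=1,\dots,n$, $P\mathbf{v}_i$ is an eigenvector of $L$ for the eigenvalue $n-i$, where $\mathbf{v}_i=\sum_{k=1}^{i}\mathbf{e}_k$ and $\mathbf{e}_k$ is the $k$th standard basis vector of $\mathbb{R}^n$.
   Context: $d^{+}(i)=\sum_{j\in V} w_{ij}$, $D=\mathrm{diag}(d^{+}(1),\dots,d^{+}(n))$, $A=[w_{ij}]$, $L=D-A$. A tournament is a digraph such that for each pair of distinct vertices exactly one of $(i,j),(j,i)$ is an edge. A complete dominance graph is an acyclic tournament in which every edge has weight $1$. *)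

From HB Require Import structures.
From mathcomp Require Import all_boot all_order all_algebra.
From mathcomp Require Import fingroup perm.
Set Implicit Arguments. Unset Strict Implicit. Unset Printing Implicit Defensive.
Import Order.TTheory GRing.Theory Num.Theory.
Local Open Scope ring_scope.

Section Defs.
Variables (R : numDomainType) (n : nat).
Implicit Type w : 'M[R]_n.

Definition edge w : rel 'I_n := fun i j => w i j != 0.

Definition is_tournament w : Prop :=
  forall i j : 'I_n, i != j -> (edge w i j) (+) (edge w j i).

Definition is_acyclic w : Prop :=
  forall i j : 'I_n, edge w i j -> ~~ connect (edge w) j i.

Definition complete_dominance w : Prop :=
  [/\ is_tournament w, is_acyclic w & forall i j, edge w i j -> w i j = 1].

Definition outdeg w (i : 'I_n) : R := \sum_(j < n) w i j.

Definition laplacian w : 'M[R]_n := diag_mx (\row_i outdeg w i) - w.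

Definition eigenvector (L : 'M[R]_n) (lam : R) (x : 'cV[R]_n) : Prop :=
  x != 0 /\ L *m x = lam *: x.

(* v_k = e_1 + ... + e_k (1-based), i.e. entries j < k (0-based) equal 1 *)
Definition vvec (k : nat) : 'cV[R]_n := \col_(j < n) (if (j < k)%N then 1 else 0).
End Defs.

From HB Require Import structures.
From mathcomp Require Import all_boot all_order all_algebra.
From mathcomp Require Import fingroup perm zify.
Import Order.TTheory GRing.Theory Num.Theory.
Local Open Scope ring_scope.

(* A complete dominance graph is the strict order of a ranking: w_ij = [s i < s j]
   for a permutation s, i.e. w = dominance_mx s.  Row i of L (P v_k) is
   \sum_l w_il [k <= s l] if s i < k and - \sum_l w_il [s l < k] otherwise; for
   w = dominance_mx s these are n - k and 0.  Conversely, reading the eigenvalue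
   equations at row i with k = s i + 1 and k = s j + 1 gives two vanishing sums of
   nonnegative terms, which force w_ij = [s i < s j]. *)

Section Ranking.
Variables (n : nat) (e : rel 'I_n).
Hypotheses (e_irr : irreflexive e) (e_trans : transitive e)
  (e_total : forall i j, i != j -> e i j || e j i).

Let rank i := #|[set j | e j i]|.

Let rank_lt_n i : (rank i < n)%N.
Proof.
rewrite -[n in (_ < n)%N]card_ord -cardsT; apply/proper_card/properP.
by split; [exact: subsetT | exists i; rewrite !inE ?e_irr].
Qed.

Let rank_lt i j : e i j -> (rank i < rank j)%N.
Proof.
move=> eij; apply/proper_card/properP; split.
  by apply/subsetP => k; rewrite !inE => eki; apply: e_trans eki eij.
by exists i; rewrite !inE ?eij ?e_irr.
Qed.

Let rank_inj : injective (fun i => Ordinal (rank_lt_n i)).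
Proof.
move=> i j /(congr1 val) /= eq_rank; apply/eqP/negPn/negP => /e_total.
by case/orP=> /rank_lt; rewrite eq_rank ltnn.
Qed.

Lemma strict_total_order_ranking :
  exists s : 'S_n, forall i j, e i j = (s i < s j)%N.
Proof.
exists (perm rank_inj) => i j; rewrite !permE /=.
case: (boolP (e i j)) => [/rank_lt // | not_eij].
have [<-|/e_total] := eqVneq i j; first by rewrite ltnn.
by rewrite (negbTE not_eij) => /rank_lt /ltnW; rewrite leqNgt => /negbTE.
Qed.

End Ranking.

Section DominanceMatrix.
Variables (R : numDomainType) (n : nat).
Implicit Types (w : 'M[R]_n) (s : 'S_n).

Definition dominance_mx s : 'M[R]_n := \matrix_(i, j) ((s i < s j)%N)%:R.

Lemma edge_dominance_mx s i j : edge (dominance_mx s) i j = (s i < s j)%N.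
Proof. by rewrite /edge mxE pnatr_eq0; case: (s i < s j)%N. Qed.

Lemma connect_dominance_mx s i j :
  connect (edge (dominance_mx s)) i j -> (s i <= s j)%N.
Proof.
case/connectP=> p + ->; elim: p i => [|k p IHp] i //= /andP[eik /IHp].
by rewrite edge_dominance_mx in eik; apply/leq_trans/ltnW.
Qed.

Lemma dominance_mx_complete s : complete_dominance (dominance_mx s).
Proof.
split=> [i j | i j | i j]; rewrite ?edge_dominance_mx.
- move=> nij; have : val (s i) != val (s j) by rewrite (inj_eq val_inj) (inj_eq perm_inj).
  by case: ltngtP.
- by move=> lt_ij; apply/negP => /connect_dominance_mx; rewrite leqNgt lt_ij.
- by rewrite mxE => ->.
Qed.

Lemma complete_dominanceP w :
  complete_dominance w <-> exists s, w = dominance_mx s.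
Proof.
split=> [[tour acyc weight1] | [s ->]]; last exact: dominance_mx_complete.
have irr : irreflexive (edge w).
  by move=> i; apply/negbTE/negP => eii; move: (acyc i i eii); rewrite connect0.
have trans : transitive (edge w).
  move=> j i k eij ejk; have [eik|nik] := eqVneq i k.
    by move: (acyc i j eij); rewrite eik connect1.
  move: (tour i k nik); case: (edge w i k) => //= eki.
  by move: (acyc i j eij); rewrite (connect_trans (connect1 ejk) (connect1 eki)).
have total i j : i != j -> edge w i j || edge w j i.
  by move/tour; case: (edge w i j).
have [s es] := @strict_total_order_ranking n (edge w) irr trans total.
exists s; apply/matrixP => i j; rewrite mxE -es.
case: (boolP (edge w i j)) => [/weight1 // | ].
by rewrite /edge negbK => /eqP.
Qed.

Lemma perm_vvecE s k i : (perm_mx s *m vvec R n k) i 0 = ((s i < k)%N)%:R.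
Proof. by rewrite -row_permE !mxE; case: (s i < k)%N. Qed.

Lemma laplacian_mulE w (x : 'cV[R]_n) i :
  (laplacian w *m x) i 0 = \sum_j w i j * (x i 0 - x j 0).
Proof.
rewrite /laplacian mulmxBl mul_diag_mx !mxE /outdeg mulr_suml -sumrB.
by apply: eq_bigr => j _; rewrite mulrBr.
Qed.

Lemma laplacian_perm_vvecE w s k i :
  (laplacian w *m (perm_mx s *m vvec R n k)) i 0 =
  if (s i < k)%N then \sum_j w i j * ((k <= s j)%N)%:R
  else - \sum_j w i j * ((s j < k)%N)%:R.
Proof.
rewrite laplacian_mulE; case: ltnP => [si_lt_k | k_le_si].
  apply: eq_bigr => j _; rewrite !perm_vvecE si_lt_k.
  by case: leqP; rewrite /= ?subr0 ?subrr.
rewrite -sumrN; apply: eq_bigr => j _.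
by rewrite !perm_vvecE ltnNge k_le_si sub0r mulrN.
Qed.

Lemma sum_perm_leq s k : \sum_j ((k <= s j)%N)%:R = (n - k)%:R :> R.
Proof.
rewrite (reindex_inj (@perm_inj _ s^-1)%g) -natr_sum; congr _%:R.
under eq_bigr do rewrite permKV.
elim: n {s} => [|m IHm]; first by rewrite big_ord0.
by rewrite big_ord_recr /= IHm; case: leqP; lia.
Qed.

Lemma perm_vvec_neq0 s (m : 'I_n) : perm_mx s *m vvec R n m.+1 != 0.
Proof.
apply/negP => /eqP/matrixP/(_ ((s^-1)%g m) 0).
by rewrite perm_vvecE permKV ltnSn mxE; apply/eqP; rewrite oner_eq0.
Qed.

Lemma dominance_mx_eigenvector s (m : 'I_n) :
  eigenvector (laplacian (dominance_mx s)) (n - m.+1)%:R (perm_mx s *m vvec R n m.+1).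
Proof.
split; first exact: perm_vvec_neq0.
apply/matrixP => i j; rewrite ord1 laplacian_perm_vvecE [RHS]mxE perm_vvecE.
case: ltnP => [si_le_m | m_lt_si].
  rewrite mulr1 -(sum_perm_leq s); apply: eq_bigr => l _; rewrite mxE.
  case: (ltnP m (s l)) => [m_lt_sl | ]; rewrite ?mulr0 //.
  by rewrite (leq_ltn_trans _ m_lt_sl) ?mul1r.
rewrite mulr0 big1 ?oppr0 // => l _; rewrite mxE.
case: (ltnP (s i) (s l)) => [si_lt_sl | _]; rewrite ?mul0r //.
by rewrite ltnS leqNgt (ltn_trans m_lt_si si_lt_sl) mulr0.
Qed.

Section EigenvectorsDetermineWeights.
Variables (w : 'M[R]_n) (s : 'S_n).
Hypotheses (w_range : forall i j, 0 <= w i j <= 1) (w_loop : forall i, w i i = 0).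
Hypothesis w_eigen : forall m : 'I_n,
  eigenvector (laplacian w) (n - m.+1)%:R (perm_mx s *m vvec R n m.+1).

Let eigen_row (m : 'I_n) i :
  (laplacian w *m (perm_mx s *m vvec R n m.+1)) i 0 =
  (n - m.+1)%:R * ((s i < m.+1)%N)%:R.
Proof. by rewrite (w_eigen m).2 mxE perm_vvecE. Qed.

Let weight_ahead i j : (s i < s j)%N -> w i j = 1.
Proof.
move=> lt_ij; move: (eigen_row (s i) i).
rewrite laplacian_perm_vvecE ltnSn mulr1 -(sum_perm_leq s) => /esym/eqP.
rewrite -subr_eq0 -sumrB => /eqP sum0.
have terms_ge0 l : true -> 0 <= ((s i < s l)%N)%:R - w i l * ((s i < s l)%N)%:R.
  move=> _; case: (s i < s l)%N; rewrite /= ?mulr1 ?mulr0 ?subrr //.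
  by rewrite subr_ge0; case/andP: (w_range i l).
have /eqP := psumr_eq0P terms_ge0 sum0 (i := j) isT.
by rewrite lt_ij mulr1 subr_eq0 => /eqP.
Qed.

Let weight_behind i j : (s j < s i)%N -> w i j = 0.
Proof.
move=> lt_ji; move: (eigen_row (s j) i); rewrite laplacian_perm_vvecE.
have -> : (s i < (s j).+1)%N = false by rewrite ltnS leqNgt lt_ji.
rewrite mulr0 => /eqP; rewrite oppr_eq0 => /eqP sum0.
have terms_ge0 l : true -> 0 <= w i l * ((s l < (s j).+1)%N)%:R.
  by move=> _; rewrite mulr_ge0 ?ler0n //; case/andP: (w_range i l).
by have := psumr_eq0P terms_ge0 sum0 (i := j) isT; rewrite ltnSn mulr1.
Qed.

Lemma eigenvectors_dominance_mx : w = dominance_mx s.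
Proof.
apply/matrixP => i j; rewrite mxE; case: ltngtP => [lt_ij | lt_ji | eq_ij].
- exact: weight_ahead.
- exact: weight_behind.
- by rewrite (perm_inj (val_inj eq_ij)) w_loop.
Qed.

End EigenvectorsDetermineWeights.

End DominanceMatrix.

Theorem theorem3p2 (R : realFieldType) (n : nat) (w : 'M[R]_n)
  (hw : forall i j, 0 <= w i j <= 1) (hloop : forall i, w i i = 0) :
  complete_dominance w <->
  exists s : 'S_n, forall i : 'I_n,
    eigenvector (laplacian w) (n - i.+1)%:R (perm_mx s *m vvec R n i.+1).
Proof.
rewrite complete_dominanceP; split=> [[s ->] | [s eigen]]; exists s.
  exact: dominance_mx_eigenvector.
exact: (@eigenvectors_dominance_mx R n w s hw hloop eigen).
Qed.
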